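(* Let $\mathfrak{A}$ be a $(\circ,\wedge,\mathsf{A})$-algebra that is completely representable by partial functions. Then composition in $\mathfrak{A}$ is completely left-distributive over joins and completely left-distributive over meets: for every $a\in\mathfrak{A}$, (i) for every $S\subseteq\mathfrak{A}$ such that $\bigvee S$ exists, $\bigvee\{a\circ s\mid s\in S\}$ exists and equals $a\circ\bigvee S$; (ii) for every nonempty $S\subseteq\mathfrak{A}$ such that $\bigwedge S$ exists, $\bigwedge\{a\circ s\mid s\in S\}$ exists and equals $a\circ\bigwedge S$.
   Context: A $(\circ,\wedge,\mathsf{A})$-algebra is a set with two binary operations $\circ,\wedge$ and one unary operation $\mathsf{A}$. An algebra of partial functions of this signature is a set of partial functions, with base $X$ the union of all their domains and ranges, closed under: composition $f\circ g=\{(x,z)\mid \exists y\,(x,y)\in f,(y,z)\in g\}$ (apply $f$ first, then $g$); intersection; antidomain $\mathsf{A}(f)=\{(x,x)\mid x\in X, x\notin\mathrm{dom}(f)\}$. A representation by partial functions is an isomorphism onto such an algebra. The order is $a\le b\iff a\wedge b=a$. A representation $\theta$ is complete if for every nonempty $S$ with $\bigwedge S$ existing, $\theta(\bigwedge S)=\bigcap\theta[S]$ (equivalently, for every $S$ with $\bigvee S$ existing, $\theta(\bigvee S)=\bigcup\theta[S]$). An algebra is completely representable if it has a complete representation. *)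

From Stdlib Require Import Classical.

Set Implicit Arguments.

Record CMAAlg := {
  car :> Type;
  comp : car -> car -> car;
  meet : car -> car -> car;
  antid : car -> car
}.

Definition ale (Al : CMAAlg) (a b : Al) : Prop := meet Al a b = a.

Definition is_ub {Al : CMAAlg} (S : Al -> Prop) (u : Al) : Prop :=
  forall s, S s -> ale Al s u.
Definition is_lb {Al : CMAAlg} (S : Al -> Prop) (l : Al) : Prop :=
  forall s, S s -> ale Al l s.

Definition is_join {Al : CMAAlg} (S : Al -> Prop) (j : Al) : Prop :=
  is_ub S j /\ forall u, is_ub S u -> ale Al j u.
Definition is_meet {Al : CMAAlg} (S : Al -> Prop) (m : Al) : Prop :=
  is_lb S m /\ forall l, is_lb S l -> ale Al l m.

Definition rel (X : Type) := X -> X -> Prop.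

Definition functional X (f : rel X) : Prop :=
  forall x y z, f x y -> f x z -> y = z.

Definition rel_eq X (f g : rel X) : Prop := forall x y, f x y <-> g x y.

(* composition: apply f first, then g *)
Definition rcomp X (f g : rel X) : rel X :=
  fun x z => exists y, f x y /\ g y z.
Definition rinter X (f g : rel X) : rel X := fun x y => f x y /\ g x y.
Definition rdom X (f : rel X) (x : X) : Prop := exists y, f x y.
Definition rran X (f : rel X) (y : X) : Prop := exists x, f x y.
Definition rantid X (B : X -> Prop) (f : rel X) : rel X :=
  fun x y => x = y /\ B x /\ ~ rdom f x.

Definition base {X} {Al : CMAAlg} (theta : Al -> rel X) (x : X) : Prop :=
  exists a, rdom (theta a) x \/ rran (theta a) x.

Definition representation {X} {Al : CMAAlg} (theta : Al -> rel X) : Prop :=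
  (forall a, functional (theta a)) /\
  (forall a b, rel_eq (theta a) (theta b) -> a = b) /\
  (forall a b, rel_eq (theta (comp Al a b)) (rcomp (theta a) (theta b))) /\
  (forall a b, rel_eq (theta (meet Al a b)) (rinter (theta a) (theta b))) /\
  (forall a, rel_eq (theta (antid Al a)) (rantid (base theta) (theta a))).

Definition complete_representation {X} {Al : CMAAlg} (theta : Al -> rel X) : Prop :=
  representation theta /\
  forall (S : Al -> Prop) (m : Al), (exists s, S s) -> is_meet S m ->
    forall x y, theta m x y <-> (forall s, S s -> theta s x y).

Definition completely_representable (Al : CMAAlg) : Prop :=
  exists (X : Type) (theta : Al -> rel X), complete_representation theta.

Definition lcomp_img {Al : CMAAlg} (a : Al) (S : Al -> Prop) : Al -> Prop :=
  fun t => exists s, S s /\ t = comp Al a s.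

(* Since the representation is complete, every existing join [j = ⋁S] is
   represented by the union of the [θ s]: the elements [A(s) ∘ j] (j restricted
   off dom s), together with [j] (which keeps the family nonempty when S is
   empty), have the empty element [A(j) ∘ j] as their meet, so by completeness
   no pair of [θ j] avoids every [θ s].  Left composition with a partial
   function preserves unions, and, because [θ a] is functional, also nonempty
   intersections; these are exactly (i) and (ii). *)

From Stdlib Require Import Classical.

Definition subrel {X : Type} (f g : rel X) : Prop := forall x y, f x y -> g x y.

Lemma rcomp_functional_common_mid {X I : Type} {f : rel X} {P : I -> Prop}
    {g : I -> rel X} {x z : X} :
  functional f -> (exists i, P i) ->
  (forall i, P i -> rcomp f (g i) x z) ->
  exists y, f x y /\ forall i, P i -> g i y z.
Proof.
  intros f_fun [i0 Pi0] Hcomp.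
  destruct (Hcomp i0 Pi0) as [y [fxy _]].
  exists y. split; [exact fxy |].
  intros i Pi. destruct (Hcomp i Pi) as [y' [fxy' giy'z]].
  rewrite (f_fun x y y' fxy fxy'). exact giy'z.
Qed.

Section Representation.

Context {Al : CMAAlg} {X : Type} {theta : Al -> rel X}.
Hypothesis theta_rep : representation theta.

Lemma ale_subrel a b : ale Al a b <-> subrel (theta a) (theta b).
Proof.
  destruct theta_rep as [_ [theta_inj [_ [theta_meet _]]]].
  unfold ale. split.
  - intros Hab x y Haxy. rewrite <- Hab in Haxy.
    apply theta_meet in Haxy. apply Haxy.
  - intros Hab. apply theta_inj. intros x y. split.
    + intros Hmeet. apply theta_meet in Hmeet. apply Hmeet.
    + intros Haxy. apply theta_meet. split; auto.
Qed.

Lemma theta_comp a b x z :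
  theta (comp Al a b) x z <-> exists y, theta a x y /\ theta b y z.
Proof. apply theta_rep. Qed.

(* The base condition of the antidomain holds because [x ∈ dom θ j]. *)
Lemma theta_restrict s j x z :
  theta (comp Al (antid Al s) j) x z <-> ~ rdom (theta s) x /\ theta j x z.
Proof.
  destruct theta_rep as [_ [_ [_ [_ theta_antid]]]].
  rewrite theta_comp. split.
  - intros [y [Hant Hj]]. apply theta_antid in Hant.
    destruct Hant as [<- [_ Hndom]]. auto.
  - intros [Hndom Hj]. exists x. split; [| exact Hj].
    apply theta_antid. repeat split; auto.
    exists j. left. exists z. exact Hj.
Qed.

Lemma theta_self_restrict_empty j x z : ~ theta (comp Al (antid Al j) j) x z.
Proof.
  rewrite theta_restrict. intros [Hndom Hj]. apply Hndom. exists z. exact Hj.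
Qed.

Lemma comp_ale_r a b c : ale Al b c -> ale Al (comp Al a b) (comp Al a c).
Proof.
  rewrite !ale_subrel. intros Hbc x z. rewrite !theta_comp.
  intros [y [Hay Hbyz]]. exists y. auto.
Qed.

Lemma lcomp_img_ub a {S u} : is_ub S u -> is_ub (lcomp_img a S) (comp Al a u).
Proof. intros Hub t [s [Ss ->]]. apply comp_ale_r, Hub, Ss. Qed.

Lemma lcomp_img_lb a {S l} : is_lb S l -> is_lb (lcomp_img a S) (comp Al a l).
Proof. intros Hlb t [s [Ss ->]]. apply comp_ale_r, Hlb, Ss. Qed.

Definition restrictions (S : Al -> Prop) (j : Al) : Al -> Prop :=
  fun t => t = j \/ exists s, S s /\ t = comp Al (antid Al s) j.

(* A lower bound [l] lies below [j] and has domain disjoint from every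
   [s ∈ S]; hence [A(l) ∘ j] bounds [S], so [j ≤ A(l) ∘ j] and [θ l = ∅]. *)
Lemma restrictions_meet {S j} :
  is_join S j -> is_meet (restrictions S j) (comp Al (antid Al j) j).
Proof.
  intros [j_ub j_least]. split.
  - intros t _. apply ale_subrel. intros x z H.
    exfalso. eapply theta_self_restrict_empty. exact H.
  - intros l Hl. apply ale_subrel. intros x z Hlxz. exfalso.
    assert (l_le_j : subrel (theta l) (theta j)).
    { apply ale_subrel, Hl. left. reflexivity. }
    assert (Hub : is_ub S (comp Al (antid Al l) j)).
    { intros s Ss. apply ale_subrel. intros w v Hswv. apply theta_restrict. split.
      - intros [v' Hlwv'].
        assert (Hr : ale Al l (comp Al (antid Al s) j)) by (apply Hl; right; eauto).
        apply ale_subrel in Hr. apply Hr, theta_restrict in Hlwv'.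
        apply (proj1 Hlwv'). exists v. exact Hswv.
      - assert (s_le_j := j_ub s Ss). apply ale_subrel in s_le_j. apply s_le_j, Hswv. }
    assert (j_le_restr := j_least _ Hub). apply ale_subrel in j_le_restr.
    pose proof (j_le_restr x z (l_le_j x z Hlxz)) as Hrest.
    apply theta_restrict in Hrest. apply (proj1 Hrest). exists z. exact Hlxz.
Qed.

Hypothesis theta_complete : forall (S : Al -> Prop) (m : Al),
  (exists s, S s) -> is_meet S m ->
  forall x y, theta m x y <-> (forall s, S s -> theta s x y).

Lemma join_subrel_union {S j x y} :
  is_join S j -> theta j x y -> exists s, S s /\ theta s x y.
Proof.
  intros Hj Hjxy. apply NNPP. intros Hnone.
  apply (theta_self_restrict_empty j x y).
  apply (theta_complete _ _ (ex_intro _ j (or_introl eq_refl)) (restrictions_meet Hj)).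
  intros t [-> | [s [Ss ->]]]; [exact Hjxy |].
  apply theta_restrict. split; [| exact Hjxy].
  intros [w Hsxw]. apply Hnone. exists s. split; [exact Ss |].
  assert (s_le_j := proj1 Hj s Ss). apply ale_subrel in s_le_j.
  rewrite (proj1 theta_rep j x y w Hjxy (s_le_j x w Hsxw)). exact Hsxw.
Qed.

Lemma lcomp_img_join a S j :
  is_join S j -> is_join (lcomp_img a S) (comp Al a j).
Proof.
  intros Hj. split; [exact (lcomp_img_ub a (proj1 Hj)) |].
  intros u Hu. apply ale_subrel. intros x z Hxz.
  apply theta_comp in Hxz. destruct Hxz as [y [Haxy Hjyz]].
  destruct (join_subrel_union Hj Hjyz) as [s [Ss Hsyz]].
  assert (as_le_u : ale Al (comp Al a s) u) by (apply Hu; exists s; auto).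
  apply ale_subrel in as_le_u. apply as_le_u, theta_comp. eauto.
Qed.

Lemma lcomp_img_meet a S m :
  (exists s, S s) -> is_meet S m -> is_meet (lcomp_img a S) (comp Al a m).
Proof.
  intros S_ne Hm. split; [exact (lcomp_img_lb a (proj1 Hm)) |].
  intros l Hl. apply ale_subrel. intros x z Hlxz.
  assert (Hcomp : forall s, S s -> rcomp (theta a) (theta s) x z).
  { intros s Ss. apply theta_comp.
    assert (l_le_as : ale Al l (comp Al a s)) by (apply Hl; exists s; auto).
    apply ale_subrel in l_le_as. apply l_le_as, Hlxz. }
  destruct (rcomp_functional_common_mid (proj1 theta_rep a) S_ne Hcomp)
    as [y [Haxy Hsyz]].
  apply theta_comp. exists y. split; [exact Haxy |].
  apply (theta_complete _ _ S_ne Hm). exact Hsyz.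
Qed.

End Representation.

Theorem mainTheorem10 (Al : CMAAlg) :
  completely_representable Al ->
  forall a : Al,
    (forall (S : Al -> Prop) (j : Al), is_join S j ->
       is_join (lcomp_img a S) (comp Al a j)) /\
    (forall (S : Al -> Prop) (m : Al), (exists s, S s) -> is_meet S m ->
       is_meet (lcomp_img a S) (comp Al a m)).
Proof.
  intros [X [theta [theta_rep theta_complete]]] a. split.
  - exact (lcomp_img_join theta_rep theta_complete a).
  - exact (lcomp_img_meet theta_rep theta_complete a).
Qed.
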